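(* Let $X$ be a Tychonoff space with $|X|>1$ and $I\in\mathbb{A}(X)$. Then $I$ is a leaf vertex of $\mathbb{AG}(X)$ if and only if $X\setminus\overline{\mathcal{O}(I)}$ is a singleton.
   Context: $C(X)$ denotes the ring of all real-valued continuous functions on $X$; $\mathrm{Coz}(f)=\{x: f(x)\neq 0\}$; for $S\subseteq C(X)$, $\mathcal{O}(S)=\bigcup_{f\in S}\mathrm{Coz}(f)$. $\mathbb{A}(X)$ is the set of nonzero ideals $I$ of $C(X)$ for which there is a nonzero ideal $J$ with $IJ=\{0\}$; $\mathbb{AG}(X)$ has vertex set $\mathbb{A}(X)$, distinct $I,J$ adjacent iff $IJ=\{0\}$. A leaf vertex is a vertex adjacent to exactly one vertex. Overline denotes closure. *)

From Stdlib Require Import Reals List.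
Open Scope R_scope.

Record topology (X : Type) := {
  is_open : (X -> Prop) -> Prop;
  open_full : is_open (fun _ => True);
  open_inter : forall U V, is_open U -> is_open V -> is_open (fun x => U x /\ V x);
  open_union : forall F : (X -> Prop) -> Prop,
      (forall U, F U -> is_open U) -> is_open (fun x => exists U, F U /\ U x)
}.
Arguments is_open {X} t U.

Definition is_closed {X : Type} (T : topology X) (F : X -> Prop) : Prop :=
  is_open T (fun x => ~ F x).

Definition closure {X : Type} (T : topology X) (S : X -> Prop) : X -> Prop :=
  fun x => forall U, is_open T U -> U x -> exists y, U y /\ S y.

Definition R_open (U : R -> Prop) : Prop :=
  forall y, U y -> exists e, 0 < e /\ forall z, Rabs (z - y) < e -> U z.

Definition continuous {X : Type} (T : topology X) (f : X -> R) : Prop :=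
  forall U, R_open U -> is_open T (fun x => U (f x)).

Definition tychonoff {X : Type} (T : topology X) : Prop :=
  (forall x : X, is_closed T (fun y => y = x)) /\
  (forall (F : X -> Prop) (x : X), is_closed T F -> ~ F x ->
     exists f : X -> R, continuous T f /\ f x = 0 /\
       (forall y, F y -> f y = 1) /\ (forall y, 0 <= f y <= 1)).

(* Subsets of C(X) are predicates on X -> R; elements must be continuous. *)
Definition zerof {X : Type} : X -> R := fun _ => 0.

Definition ideal {X : Type} (T : topology X) (I : (X -> R) -> Prop) : Prop :=
  (forall f, I f -> continuous T f) /\
  I zerof /\
  (forall f g, I f -> I g -> I (fun x => f x + g x)) /\
  (forall f g, continuous T g -> I f -> I (fun x => g x * f x)).

Definition nonzero_set {X : Type} (I : (X -> R) -> Prop) : Prop :=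
  exists f, I f /\ f <> zerof.

Definition same_set {X : Type} (I J : (X -> R) -> Prop) : Prop :=
  forall f, I f <-> J f.

Definition prod_ideal {X : Type} (I J : (X -> R) -> Prop) : (X -> R) -> Prop :=
  fun h => exists l : list ((X -> R) * (X -> R)),
    Forall (fun p => I (fst p) /\ J (snd p)) l /\
    h = fold_right (fun p acc => fun x => fst p x * snd p x + acc x) zerof l.

Definition annihil {X : Type} (I J : (X -> R) -> Prop) : Prop :=
  forall h, prod_ideal I J h <-> h = zerof.

Definition in_A {X : Type} (T : topology X) (I : (X -> R) -> Prop) : Prop :=
  ideal T I /\ nonzero_set I /\
  exists J, ideal T J /\ nonzero_set J /\ annihil I J.

Definition adjacent {X : Type} (T : topology X) (I J : (X -> R) -> Prop) : Prop :=
  in_A T I /\ in_A T J /\ ~ same_set I J /\ annihil I J.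

(* leaf: adjacent to exactly one vertex (vertices = ideals, compared as sets) *)
Definition leaf {X : Type} (T : topology X) (I : (X -> R) -> Prop) : Prop :=
  in_A T I /\
  exists J, adjacent T I J /\ forall K, adjacent T I K -> same_set K J.

Definition coz {X : Type} (f : X -> R) : X -> Prop := fun x => f x <> 0.

Definition O_of {X : Type} (I : (X -> R) -> Prop) : X -> Prop :=
  fun x => exists f, I f /\ coz f x.

(* The annihilator Ann(I) of I vanishes on the closure of O(I), and the
   vertices adjacent to I are exactly the nonzero ideals contained in Ann(I).
   If the complement of that closure is a single point x0, every element of
   Ann(I) is a constant multiple of any nonzero one off the closure, so every
   such ideal is Ann(I) itself: I has exactly one neighbour.  Conversely, for
   two distinct points a, y off the closure, complete regularity yields
   elements of Ann(I) vanishing at a but not at y and vice versa, so the ideals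
   {h in Ann(I) | h a = 0} and {h in Ann(I) | h y = 0} are two different
   neighbours of I. *)
From Stdlib Require Import Reals List.
From Stdlib Require Import Classical FunctionalExtensionality PropExtensionality Psatz.
Open Scope R_scope.

Section Topology.
Context {X : Type} (T : topology X).

Lemma open_ext (U V : X -> Prop) :
  is_open T U -> (forall x, U x <-> V x) -> is_open T V.
Proof.
  intros HU HUV.
  replace V with U; [exact HU|].
  apply functional_extensionality; intro x; apply propositional_extensionality, HUV.
Qed.

Lemma open_of_nbhd (S : X -> Prop) :
  (forall x, S x -> exists V, is_open T V /\ V x /\ forall y, V y -> S y) ->
  is_open T S.
Proof.
  intros Hnbhd.
  apply open_ext with (U := fun x => exists V, (is_open T V /\ forall y, V y -> S y) /\ V x).
  - apply (open_union _ T). intros V [HV _]; exact HV.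
  - intro x; split.
    + intros [V [[_ HVS] Vx]]; auto.
    + intros Sx; destruct (Hnbhd x Sx) as [V [HV [Vx HVS]]]; exists V; auto.
Qed.

Lemma open_empty : is_open T (fun _ => False).
Proof.
  apply open_ext with (U := fun x => exists V, (fun _ : X -> Prop => False) V /\ V x).
  - apply (open_union _ T). intros V [].
  - intro x; split; [intros [V [[] _]] | intros []].
Qed.

Lemma closure_closed (S : X -> Prop) : is_closed T (closure T S).
Proof.
  apply open_of_nbhd. intros x Hx.
  apply not_all_ex_not in Hx as [U HU].
  apply imply_to_and in HU as [HUo HU].
  apply imply_to_and in HU as [Ux HU].
  exists U. split; [exact HUo|]. split; [exact Ux|].
  intros y Uy Hcl. destruct (Hcl U HUo Uy) as [z [Uz Sz]]. apply HU; eauto.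
Qed.

Lemma closed_union (F G : X -> Prop) :
  is_closed T F -> is_closed T G -> is_closed T (fun x => F x \/ G x).
Proof.
  intros HF HG.
  eapply open_ext; [apply (open_inter _ T); [exact HF|exact HG]|]. simpl. tauto.
Qed.

Lemma R_open_ball (c e : R) : R_open (fun z => Rabs (z - c) < e).
Proof.
  intros y Hy. exists (e - Rabs (y - c)). split; [lra|].
  intros z Hz. replace (z - c) with ((z - y) + (y - c)) by ring.
  eapply Rle_lt_trans; [apply Rabs_triang|lra].
Qed.

Lemma R_open_neq0 : R_open (fun z => z <> 0).
Proof.
  intros y Hy. exists (Rabs y). split; [apply Rabs_pos_lt; auto|].
  intros z Hz ->. rewrite Rminus_0_l, Rabs_Ropp in Hz. lra.
Qed.

Lemma continuous_ball (f : X -> R) (x : X) (e : R) :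
  continuous T f -> is_open T (fun y => Rabs (f y - f x) < e).
Proof. intros Hf; apply (Hf (fun z => Rabs (z - f x) < e)), R_open_ball. Qed.

Lemma continuous_const (c : R) : continuous T (fun _ => c).
Proof.
  intros U _. destruct (classic (U c)).
  - apply open_ext with (U := fun _ => True); [apply (open_full _ T)|tauto].
  - apply open_ext with (U := fun _ => False); [apply open_empty|tauto].
Qed.

Lemma continuous_opp (f : X -> R) : continuous T f -> continuous T (fun x => - f x).
Proof.
  intros Hf U HU. apply (Hf (fun z => U (- z))).
  intros w Hw. destruct (HU _ Hw) as [e [He HeU]]. exists e. split; auto.
  intros z Hz. apply HeU.
  replace (- z - - w) with (- (z - w)) by ring. rewrite Rabs_Ropp; auto.
Qed.

Lemma continuous_add (f g : X -> R) :
  continuous T f -> continuous T g -> continuous T (fun x => f x + g x).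
Proof.
  intros Hf Hg U HU. apply open_of_nbhd. intros x Hx.
  destruct (HU _ Hx) as [e [He HeU]].
  exists (fun y => Rabs (f y - f x) < e/2 /\ Rabs (g y - g x) < e/2).
  split; [apply (open_inter _ T); apply continuous_ball; auto|].
  split.
  - rewrite !Rminus_diag, Rabs_R0; lra.
  - intros y [Hfy Hgy]. apply HeU.
    replace (f y + g y - (f x + g x)) with ((f y - f x) + (g y - g x)) by ring.
    eapply Rle_lt_trans; [apply Rabs_triang|lra].
Qed.

Lemma continuous_mul (f g : X -> R) :
  continuous T f -> continuous T g -> continuous T (fun x => f x * g x).
Proof.
  intros Hf Hg U HU. apply open_of_nbhd. intros x Hx.
  destruct (HU _ Hx) as [e [He HeU]].
  set (K := Rabs (f x) + Rabs (g x) + 1).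
  assert (HK : 0 < K) by (unfold K; pose proof (Rabs_pos (f x)); pose proof (Rabs_pos (g x)); lra).
  set (d := Rmin 1 (e / K)).
  assert (Hd0 : 0 < d) by (apply Rmin_glb_lt; [lra|apply Rdiv_lt_0_compat; lra]).
  assert (HdK : d * K <= e).
  { apply Rle_trans with (e / K * K); [apply Rmult_le_compat_r; [lra|apply Rmin_r]|].
    right; field; lra. }
  exists (fun y => Rabs (f y - f x) < d /\ Rabs (g y - g x) < d).
  split; [apply (open_inter _ T); apply continuous_ball; auto|].
  split.
  - rewrite !Rminus_diag, Rabs_R0; lra.
  - intros y [Ha Hb]. apply HeU.
    set (a := f y - f x) in *. set (b := g y - g x) in *.
    replace (f y * g y - f x * g x) with (a * (g x + b) + f x * b) by (unfold a, b; ring).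
    assert (Htri : Rabs (a * (g x + b) + f x * b)
                   <= Rabs a * (Rabs (g x) + Rabs b) + Rabs (f x) * Rabs b).
    { eapply Rle_trans; [apply Rabs_triang|]. rewrite !Rabs_mult.
      apply Rplus_le_compat_r, Rmult_le_compat_l; [apply Rabs_pos|apply Rabs_triang]. }
    assert (Hd1 : d <= 1) by apply Rmin_l.
    pose proof (Rabs_pos a). pose proof (Rabs_pos b).
    pose proof (Rabs_pos (f x)). pose proof (Rabs_pos (g x)).
    assert (Rabs a * (Rabs (g x) + Rabs b) + Rabs (f x) * Rabs b < d * K)
      by (unfold K; nra).
    lra.
Qed.

End Topology.

Lemma not_zerof_ex {X : Type} (h : X -> R) : h <> zerof -> exists x, h x <> 0.
Proof.
  intros Hh. apply NNPP; intro Hall. apply Hh, functional_extensionality; intro x.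
  apply NNPP; intro Hx. apply Hall; eauto.
Qed.

Lemma annihilP {X : Type} (I J : (X -> R) -> Prop) :
  annihil I J <-> forall f g, I f -> J g -> forall x, f x * g x = 0.
Proof.
  split.
  - intros HIJ f g If Jg x.
    assert (E : (fun x => f x * g x + zerof x) = zerof).
    { apply HIJ. exists ((f, g) :: nil). split; [repeat constructor; auto|reflexivity]. }
    pose proof (equal_f E x) as Ex. unfold zerof in Ex. lra.
  - intros Hpt h; split.
    + intros [l [Hl ->]]. induction Hl as [|p l [Ip Jp] Hl IH]; [reflexivity|].
      cbn [fold_right]. rewrite IH. apply functional_extensionality; intro y.
      unfold zerof. rewrite (Hpt _ _ Ip Jp y). ring.
    + intros ->. exists nil. split; auto.
Qed.

Section Annihilator.
Context {X : Type} (T : topology X) (I : (X -> R) -> Prop).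

Definition annihilator (h : X -> R) : Prop :=
  continuous T h /\ forall f, I f -> forall x, f x * h x = 0.

Definition annihilator_at (p : X) (h : X -> R) : Prop :=
  annihilator h /\ h p = 0.

Lemma annihilator_vanish_closure (h : X -> R) (y : X) :
  annihilator h -> closure T (O_of I) y -> h y = 0.
Proof.
  intros [Hc Ha] Hy. apply NNPP; intro Hhy.
  destruct (Hy (fun x => h x <> 0)) as [z [Hhz [f [If Hfz]]]].
  - apply (Hc (fun z => z <> 0)), R_open_neq0.
  - exact Hhy.
  - destruct (Rmult_integral _ _ (Ha f If z)); auto.
Qed.

Lemma annihilator_of_annihil (J : (X -> R) -> Prop) :
  ideal T J -> annihil I J -> forall h, J h -> annihilator h.
Proof.
  intros [HJc _] HIJ h Jh. split; [auto|].
  intros f If x. apply annihilP with (I := I) (J := J); auto.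
Qed.

Lemma adjacent_annihilator (K : (X -> R) -> Prop) :
  adjacent T I K -> forall h, K h -> annihilator h.
Proof.
  intros [_ [[HK _] [_ HIK]]]. exact (annihilator_of_annihil K HK HIK).
Qed.

(* A nonzero ideal inside Ann(I) cannot be I itself, since a nonzero f in I
   would satisfy f * f = 0. *)
Lemma adjacent_of_annihilator (K : (X -> R) -> Prop) :
  in_A T I -> ideal T K -> nonzero_set K ->
  (forall h, K h -> annihilator h) -> adjacent T I K.
Proof.
  intros HI HK HKnz HKA.
  pose proof HI as HI'. destruct HI' as [HIi [[f [If Hf0]] _]].
  split; [exact HI|]. split; [|split].
  - split; [exact HK|]. split; [exact HKnz|].
    exists I. split; [exact HIi|]. split; [exists f; auto|].
    apply annihilP. intros k g Kk Ig x. rewrite Rmult_comm. apply (HKA k Kk); auto.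
  - intros HIK. destruct (not_zerof_ex f Hf0) as [x Hx].
    destruct (Rmult_integral _ _ (proj2 (HKA f (proj1 (HIK f) If)) f If x)); auto.
  - apply annihilP. intros k g Ik Kg x. apply (HKA g Kg); auto.
Qed.

Lemma ideal_annihilator_at (p : X) : ideal T (annihilator_at p).
Proof.
  split; [|split; [|split]].
  - intros f [[Hfc _] _]; exact Hfc.
  - split; [split|reflexivity].
    + apply continuous_const.
    + intros; unfold zerof; ring.
  - intros f g [[Hfc Hfa] Hfp] [[Hgc Hga] Hgp]. repeat split.
    + apply continuous_add; auto.
    + intros k Ik x. rewrite Rmult_plus_distr_l, (Hfa k Ik x), (Hga k Ik x); ring.
    + rewrite Hfp, Hgp; ring.
  - intros f g Hg [[Hfc Hfa] Hfp]. repeat split.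
    + apply continuous_mul; auto.
    + intros k Ik x. replace (k x * (g x * f x)) with (g x * (k x * f x)) by ring.
      rewrite (Hfa k Ik x); ring.
    + rewrite Hfp; ring.
Qed.

Lemma in_A_outside_closure : in_A T I -> exists a, ~ closure T (O_of I) a.
Proof.
  intros [_ [_ [J [HJ [[h [Jh Hh0]] HIJ]]]]].
  destruct (not_zerof_ex h Hh0) as [a Ha]. exists a. intro Hcl.
  apply Ha, (annihilator_vanish_closure h a); auto.
  exact (annihilator_of_annihil J HJ HIJ h Jh).
Qed.

(* Complete regularity separates y from the closed set cl(O(I)) U {p}; the
   separating function, subtracted from 1, kills O(I) and vanishes at p. *)
Lemma tychonoff_annihilator_sep (y p : X) :
  tychonoff T -> ~ closure T (O_of I) y -> y <> p ->
  exists g, annihilator g /\ g y = 1 /\ g p = 0.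
Proof.
  intros [HT1 HT2] Hy Hyp.
  destruct (HT2 (fun z => closure T (O_of I) z \/ z = p) y) as [f [Hf [Hfy [HfF _]]]].
  - apply closed_union; [apply closure_closed|apply HT1].
  - intros [H|H]; auto.
  - exists (fun x => 1 - f x). repeat split.
    + apply continuous_add; [apply continuous_const|apply continuous_opp, Hf].
    + intros k Ik x. destruct (Req_dec (k x) 0) as [E|E]; [rewrite E; ring|].
      rewrite (HfF x); [ring|]. left. intros U _ Ux. exists x. split; [auto|exists k; auto].
    + rewrite Hfy; ring.
    + rewrite (HfF p); [ring|]. right; auto.
Qed.

Lemma leaf_outside_closure_unique (a y : X) :
  tychonoff T -> leaf T I ->
  ~ closure T (O_of I) a -> ~ closure T (O_of I) y -> y = a.
Proof.
  intros HT [HI [J [_ Huniq]]] Ha Hy. apply NNPP; intro Hya.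
  destruct (tychonoff_annihilator_sep y a HT Hy Hya) as [gy [Agy [gyy gya]]].
  destruct (tychonoff_annihilator_sep a y HT Ha (not_eq_sym Hya)) as [ga [Aga [gaa gay]]].
  assert (Hadj : forall p g, annihilator g -> g p = 0 -> g <> zerof ->
                 same_set (annihilator_at p) J).
  { intros p g Ag gp Hg0. apply Huniq, adjacent_of_annihilator; auto.
    - apply ideal_annihilator_at.
    - exists g; split; [split|]; auto.
    - intros h [Ah _]; exact Ah. }
  assert (Hgy : annihilator_at a gy) by (split; auto).
  apply (Hadj a gy), (Hadj y ga) in Hgy; auto.
  - destruct Hgy as [_ E]; lra.
  - intro E; rewrite E in gaa; unfold zerof in gaa; lra.
  - intro E; rewrite E in gyy; unfold zerof in gyy; lra.
Qed.

(* Off the closure only x0 remains, so every element of Ann(I) is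
   (h x0 / k x0) * k for a fixed k in K with k x0 <> 0. *)
Lemma annihilator_sub_ideal (x0 : X) (K : (X -> R) -> Prop) :
  (forall y, ~ closure T (O_of I) y <-> y = x0) ->
  ideal T K -> nonzero_set K -> (forall h, K h -> annihilator h) ->
  forall h, annihilator h -> K h.
Proof.
  intros Hx0 HK [k [Kk Hk0]] HKA h Hh.
  destruct (not_zerof_ex k Hk0) as [x Hx].
  assert (Hxc : ~ closure T (O_of I) x)
    by (intro Hc; apply Hx, (annihilator_vanish_closure k x (HKA k Kk) Hc)).
  apply Hx0 in Hxc. subst x.
  replace h with (fun y => (fun _ => h x0 / k x0) y * k y).
  - destruct HK as [_ [_ [_ HKmul]]]. apply HKmul; [apply continuous_const|exact Kk].
  - apply functional_extensionality; intro y. destruct (classic (y = x0)) as [->|Hne].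
    + field; exact Hx.
    + assert (Hc : closure T (O_of I) y) by (apply NNPP; intro Hn; apply Hne, Hx0, Hn).
      rewrite (annihilator_vanish_closure h y Hh Hc),
              (annihilator_vanish_closure k y (HKA k Kk) Hc). ring.
Qed.

End Annihilator.

Theorem mainTheorem13 (X : Type) (T : topology X) (HT : tychonoff T)
  (H2 : exists x y : X, x <> y)
  (I : (X -> R) -> Prop) (HI : in_A T I) :
  leaf T I <->
  (exists x0 : X, forall y : X, ~ closure T (O_of I) y <-> y = x0).
Proof.
  split.
  - intros Hleaf. destruct (in_A_outside_closure T I HI) as [a Ha].
    exists a. intro y; split.
    + intro Hy. exact (leaf_outside_closure_unique T I a y HT Hleaf Ha Hy).
    + intros ->. exact Ha.
  - intros [x0 Hx0]. split; [exact HI|].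
    pose proof HI as HI'. destruct HI' as [_ [_ [J [HJ [HJnz HIJ]]]]].
    pose proof (annihilator_of_annihil T I J HJ HIJ) as HJA.
    exists J. split; [apply adjacent_of_annihilator; auto|].
    intros K HK. pose proof (adjacent_annihilator T I K HK) as HKA.
    destruct HK as [_ [[HKi [HKnz _]] _]].
    intro h; split; intro Hh.
    + exact (annihilator_sub_ideal T I x0 J Hx0 HJ HJnz HJA h (HKA h Hh)).
    + exact (annihilator_sub_ideal T I x0 K Hx0 HKi HKnz HKA h (HJA h Hh)).
Qed.
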